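(* Let $r\ge 4$, $s\in\{2,\dots,r-1\}$, and let $A$ be an $s$-partition of $r$. Then the spectrum (with multiplicities) of the standard Laplacian of $\widehat K_r(A)$ consists of $$\frac{2r+1-\sqrt{4r+1}}{2r}\ \text{and}\ \frac{2r+1+\sqrt{4r+1}}{2r}\ \text{each with multiplicity } s-1,\qquad 1+\frac1r\ \text{with multiplicity } r-s+1,\qquad 0\ \text{with multiplicity }1,$$ and the spectrum of the signless standard Laplacian of $\widehat K_r(A)$ consists of $$\frac{2r-1-\sqrt{4r+1}}{2r}\ \text{and}\ \frac{2r-1+\sqrt{4r+1}}{2r}\ \text{each with multiplicity } s-1,\qquad 1-\frac1r\ \text{with multiplicity } r-s+1,\qquad 2\ \text{with multiplicity }1.$$ In particular these spectra depend only on $r$ and $s$.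
   Context: An $s$-partition of $r\in\mathbb N$ is a multiset $\{a_1,\dots,a_s\}$ of positive integers with $a_1+\dots+a_s=r$. $\widehat K_r$ is the graph obtained from the complete graph $K_r$ (vertices $w_1,\dots,w_r$) by attaching a pendant vertex $v_i$ to each $w_i$. For an $s$-partition $A$, $\widehat K_r(A)$ is obtained from $\widehat K_r$ by identifying the pendant vertices block-wise: $\{v_1,\dots,v_{a_1}\}$, $\{v_{a_1+1},\dots,v_{a_1+a_2}\}$, …, $\{v_{a_1+\dots+a_{s-1}+1},\dots,v_r\}$ each become one vertex, keeping all edges (so the $j$-th new vertex is adjacent to exactly the $a_j$ vertices $w_i$ of its block). The standard Laplacian is $(\Delta_G f)(v)=f(v)-\frac{1}{\deg v}\sum_{u\in N_v}f(u)$ and the signless one $(\Delta_{G^+}f)(v)=f(v)+\frac{1}{\deg v}\sum_{u\in N_v}f(u)$. *)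

From mathcomp Require Import all_boot all_order all_algebra.
Set Implicit Arguments. Unset Strict Implicit. Unset Printing Implicit Defensive.
Import Order.TTheory GRing.Theory Num.Theory.

(* An s-partition A of r is encoded as a sequence of positive naturals
   (a_1, ..., a_s) with sum r; block j (0-based) consists of the indices
   i (0-based) with a_1+...+a_j <= i < a_1+...+a_{j+1}. *)
Definition is_partition (r s : nat) (A : seq nat) : bool :=
  [&& size A == s, all (fun a => 0 < a) A & sumn A == r].

Definition inblock (A : seq nat) (i j : nat) : bool :=
  (sumn (take j A) <= i) && (i < sumn (take j.+1 A)).

(* Vertices of \hat K_r(A): 'I_(r + size A); vertex i < r is w_{i+1},
   vertex r + j is the j-th identified pendant vertex (block j). *)
Definition Khat_adj (r : nat) (A : seq nat) : rel 'I_(r + size A) :=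
  fun u v =>
    if (u < r) && (v < r) then u != v
    else if (u < r) && (r <= v) then inblock A u (v - r)
    else if (r <= u) && (v < r) then inblock A v (u - r)
    else false.

Definition gdeg (n : nat) (adj : rel 'I_n) (u : 'I_n) : nat :=
  #|[pred v | adj u v]|.

Local Open Scope ring_scope.

Definition std_lap (R : fieldType) (n : nat) (adj : rel 'I_n) : 'M[R]_n :=
  \matrix_(u, v) ((u == v)%:R - (adj u v)%:R / (gdeg adj u)%:R).

Definition signless_lap (R : fieldType) (n : nat) (adj : rel 'I_n) : 'M[R]_n :=
  \matrix_(u, v) ((u == v)%:R + (adj u v)%:R / (gdeg adj u)%:R).

From mathcomp Require Import all_boot all_order all_algebra.
From mathcomp Require Import ring lra zify.
Set Implicit Arguments. Unset Strict Implicit. Unset Printing Implicit Defensive.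
Import Order.TTheory GRing.Theory Num.Theory.

(* Both Laplacians are L_t = I - t D^-1 Adj with t = 1 (standard) or t = -1
   (signless).  List the clique vertices first and the s identified pendant
   vertices last; as the latter are pairwise non-adjacent, x I - L_t is a block
   matrix with lower right block (x - 1) I.  Its Schur complement has the form
   c I + E K, where c = x - 1 - t/r and E is the r x s vertex/block incidence
   matrix, and Sylvester's identity det (c I + E K) = c^r det (I + c^-1 K E)
   moves the computation to s x s matrices.  There E^T E is the diagonal matrix
   of the block sizes and E^T 1 = (a_j)_j, so I + c^-1 K E is a scalar matrix
   plus a rank-one matrix, whence
     det (x I - L_t) = ((c (x - 1) r - 1) / r)^(s-1) c^(r-s+1) (x - 1 + t),
   and the quadratic factor has the roots (2r + t -+ sqrt (4r + 1)) / (2r).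
   Both sides being polynomials in x, it suffices to check this for x >= 3,
   where none of the quantities inverted along the way vanishes. *)

Lemma inblock_cons0 a A i : inblock (a :: A) i 0 = (i < a).
Proof. by rewrite /inblock /= take0 addn0. Qed.

Lemma inblock_consS a A i j :
  inblock (a :: A) i j.+1 = (a <= i) && inblock A (i - a) j.
Proof.
rewrite /inblock /=; case: (leqP a i) => ai /=.
  by congr andb; apply/idP/idP; lia.
by apply/negbTE/negP => /andP[]; lia.
Qed.

Lemma leq_sumn_take A m n : m <= n -> sumn (take m A) <= sumn (take n A).
Proof.
elim: A m n => [|a A IH] [|m] [|n] //= mn; rewrite ?take0 /=; try lia.
by rewrite leq_add2l IH.
Qed.

Lemma inblock_uniq A i j j' : inblock A i j -> inblock A i j' -> j = j'.
Proof.
wlog jj' : j j' / j <= j'.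
  move=> W ij ij'; case: (leqP j j') => [le_jj' | /ltnW le_j'j]; first exact: W.
  exact/esym/W.
rewrite /inblock => /andP[_ ij] /andP[j'i _].
apply/eqP; rewrite eqn_leq jj' leqNgt; apply/negP => /(leq_sumn_take A); lia.
Qed.

Lemma sum_inblock_blocks A i :
  \sum_(j < size A) inblock A i j = (i < sumn A).
Proof.
elim: A i => [|a A IH] i /=; first by rewrite big_ord0.
rewrite big_ord_recl /= inblock_cons0.
under eq_bigr => j _ do rewrite /bump leq0n add1n inblock_consS.
case: (leqP a i) => ai.
  under eq_bigr => j _ do rewrite andTb.
  by rewrite IH; congr nat_of_bool; apply/idP/idP; lia.
by rewrite big1 // addn0 ltn_addr.
Qed.

Lemma sum_ord_itv n a b : a <= b ->
  \sum_(k < n) ((a <= k) && (k < b)) = minn b n - minn a n.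
Proof.
move=> ab; elim: n => [|n IH]; first by rewrite big_ord0 !minn0.
by rewrite big_ord_recr /= IH; case: (leqP a n); case: (ltnP n b) => /=; lia.
Qed.

Lemma sum_inblock_vertices A j : j < size A ->
  \sum_(k < sumn A) inblock A k j = nth 0 A j.
Proof.
move=> jA; rewrite /inblock sum_ord_itv ?leq_sumn_take //.
have jS_A : sumn (take j.+1 A) <= sumn A by rewrite -{2}(take_size A) leq_sumn_take.
have j_jS : sumn (take j A) <= sumn (take j.+1 A) by rewrite leq_sumn_take.
rewrite (minn_idPl jS_A) (minn_idPl (leq_trans j_jS jS_A)).
by rewrite (take_nth 0 jA) sumn_rcons addKn.
Qed.

Lemma leq_size_sumn A : all (fun a => 0 < a) A -> size A <= sumn A.
Proof. by elim: A => //= a A IH /andP[a_gt0 /IH]; lia. Qed.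

Lemma gdegE n (adj : rel 'I_n) u : gdeg adj u = \sum_v adj u v.
Proof.
by rewrite /gdeg -sum1_card big_mkcond; apply: eq_bigr => v _; rewrite inE; case: adj.
Qed.

Section KhatGraph.
Variables (r : nat) (A : seq nat).
Local Notation s := (size A).
Local Notation G := (@Khat_adj r A).

Lemma Khat_adj_ll (i k : 'I_r) : G (lshift s i) (lshift s k) = (i != k).
Proof. by rewrite /Khat_adj /= !ltn_ord /= (inj_eq (@lshift_inj _ _)). Qed.

Lemma Khat_adj_lr (i : 'I_r) (j : 'I_s) : G (lshift s i) (rshift r j) = inblock A i j.
Proof. by rewrite /Khat_adj /= ltn_ord ltnNge !leq_addr /= addKn. Qed.

Lemma Khat_adj_rl (i : 'I_r) (j : 'I_s) : G (rshift r j) (lshift s i) = inblock A i j.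
Proof. by rewrite /Khat_adj /= ltn_ord ltnNge !leq_addr /= addKn. Qed.

Lemma Khat_adj_rr (j j' : 'I_s) : G (rshift r j) (rshift r j') = false.
Proof. by rewrite /Khat_adj /= !ltnNge !leq_addr. Qed.

Hypothesis sumA : sumn A = r.

Lemma gdeg_Khat_l (i : 'I_r) : gdeg G (lshift s i) = r.
Proof.
rewrite gdegE big_split_ord /=.
under eq_bigr => k _ do rewrite Khat_adj_ll.
under [X in _ + X]eq_bigr => j _ do rewrite Khat_adj_lr.
rewrite sum_inblock_blocks sumA ltn_ord (bigD1 i) //= eqxx add0n.
rewrite (eq_bigr (fun _ => 1)) => [|k]; last by rewrite eq_sym => ->.
by rewrite sum1_card cardC1 card_ord addn1 prednK // (leq_ltn_trans _ (ltn_ord i)).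
Qed.

Lemma gdeg_Khat_r (j : 'I_s) : gdeg G (rshift r j) = nth 0 A j.
Proof.
rewrite gdegE big_split_ord /=.
under eq_bigr => k _ do rewrite Khat_adj_rl.
under [X in _ + X]eq_bigr => j' _ do rewrite Khat_adj_rr.
rewrite [X in _ + X]big1 // addn0.
by have := sum_inblock_vertices (ltn_ord j); rewrite sumA.
Qed.

End KhatGraph.

Local Open Scope ring_scope.

Lemma horner_char_poly (R : comNzRingType) n (M : 'M[R]_n) x :
  (char_poly M).[x] = \det (x%:M - M).
Proof.
rewrite /char_poly -[_.[x]]/(horner_eval x _) -det_map_mx; congr (\det _).
apply/matrixP => i j; rewrite !mxE /= horner_evalE !hornerE.
by case: (i == j); rewrite /= ?mulr1n ?mulr0n ?hornerE.
Qed.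

(* Sylvester's identity: compare the block LU and UL factorisations of [[1, A], [-B, 1]]. *)
Lemma det1D_mulmxC (R : comNzRingType) m n (A : 'M[R]_(m, n)) (B : 'M[R]_(n, m)) :
  \det (1%:M + A *m B) = \det (1%:M + B *m A).
Proof.
have factorL : block_mx 1%:M A (- B) 1%:M =
    block_mx 1%:M 0 (- B) 1%:M *m block_mx 1%:M A 0 (1%:M + B *m A).
  rewrite mulmx_block !(mul1mx, mulmx1, mul0mx, mulmx0, addr0, add0r).
  by rewrite mulNmx addrCA addNr addr0.
have factorU : block_mx 1%:M A (- B) 1%:M =
    block_mx 1%:M A 0 1%:M *m block_mx (1%:M + A *m B) 0 (- B) 1%:M.
  rewrite mulmx_block !(mul1mx, mulmx1, mul0mx, mulmx0, addr0, add0r).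
  by rewrite mulmxN addrK.
have := congr1 determinant factorL.
rewrite factorU !det_mulmx !det_lblock !det_ublock !det1.
by rewrite !mul1r mulr1 => ->.
Qed.

Lemma det_scalarD_mulmx (R : fieldType) m n (A : 'M[R]_(m, n)) (B : 'M[R]_(n, m)) c :
  c != 0 -> \det (c%:M + A *m B) = c ^+ m * \det (1%:M + c^-1 *: (B *m A)).
Proof.
move=> c0; have -> : c%:M + A *m B = c *: (1%:M + A *m (c^-1 *: B)).
  by rewrite scalerDr scalemx1 -scalemxAr scalerA divff // scale1r.
by rewrite detZ det1D_mulmxC scalemxAl.
Qed.

Lemma det_block_scalar (R : fieldType) m n (P : 'M[R]_m) (Q : 'M[R]_(m, n))
    (S : 'M[R]_(n, m)) d :
  d != 0 -> \det (block_mx P Q S d%:M) = d ^+ n * \det (P - d^-1 *: (Q *m S)).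
Proof.
move=> d0; have -> : block_mx P Q S d%:M =
    block_mx 1%:M (d^-1 *: Q) 0 1%:M *m block_mx (P - d^-1 *: (Q *m S)) 0 S d%:M.
  rewrite mulmx_block !(mul1mx, mulmx1, mul0mx, mulmx0, addr0, add0r).
  rewrite -scalemxAl subrK -scalemxAl mul_mx_scalar scalerA mulVf //.
  by rewrite scale1r.
by rewrite det_mulmx det_ublock det_lblock !det_scalar !expr1n !mul1r mulrC.
Qed.

Lemma poly_eq_on_ge (R : numDomainType) (a : R) (p q : {poly R}) :
  (forall x, a <= x -> p.[x] = q.[x]) -> p = q.
Proof.
move=> pq; apply/eqP; rewrite -subr_eq0; apply/eqP.
apply: (@roots_geq_poly_eq0 _ _ [seq a + i%:R | i <- iota 0 (size (p - q))]).
- by apply/allP => _ /mapP[i _ ->]; rewrite /root !hornerE pq ?subrr ?lerDl.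
- by rewrite map_inj_uniq ?iota_uniq // => i j /addrI /eqP; rewrite eqr_nat => /eqP.
- by rewrite size_map size_iota.
Qed.

Definition signed_lap (R : fieldType) n (adj : rel 'I_n) (t : R) : 'M[R]_n :=
  \matrix_(u, v) ((u == v)%:R - t * (adj u v)%:R / (gdeg adj u)%:R).

Lemma std_lap_signed (R : fieldType) n (adj : rel 'I_n) :
  std_lap R adj = signed_lap adj 1.
Proof. by apply/matrixP => u v; rewrite !mxE mul1r. Qed.

Lemma signless_lap_signed (R : fieldType) n (adj : rel 'I_n) :
  signless_lap R adj = signed_lap adj (-1).
Proof. by apply/matrixP => u v; rewrite !mxE mulN1r mulNr opprK. Qed.

Section KhatCharDet.
Variables (R : numFieldType) (r : nat) (A : seq nat) (t x c : R).
Local Notation s := (size A).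
Local Notation G := (@Khat_adj r A).
Local Notation d := (x - 1).
Local Notation e := (1 - (c * d * r%:R)^-1).
Local Notation b i j := ((inblock A i j)%:R : R).
Local Notation a j := ((nth 0 A j)%:R : R).
Hypotheses (sumA : sumn A = r) (partsA : all (fun a => 0 < a)%N A).
Hypotheses (s_gt0 : (0 < s)%N) (t2 : t ^+ 2 = 1).
(* [c] is a variable rather than a notation so that [field] treats it as an atom. *)
Hypotheses (cE : c = x - (1 + t / r%:R)) (c0 : c != 0) (d0 : d != 0).
Hypothesis cdr1 : c * d * r%:R != 1.

Let s_le_r : (s <= r)%N.
Proof. by rewrite -sumA leq_size_sumn. Qed.

Let r0 : r%:R != 0 :> R.
Proof. by rewrite pnatr_eq0 -lt0n (leq_trans s_gt0). Qed.

Let a0 (j : 'I_s) : a j != 0.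
Proof. by rewrite pnatr_eq0 -lt0n (allP partsA) ?mem_nth. Qed.

Let e0 : e != 0.
Proof. by rewrite subr_eq0 eq_sym invr_eq1. Qed.

Let sum_b_row (i : 'I_r) : \sum_(j < s) b i j = 1.
Proof. by rewrite -natr_sum sum_inblock_blocks sumA ltn_ord. Qed.

Let sum_b_col (j : 'I_s) : \sum_(k < r) b k j = a j.
Proof.
by rewrite -natr_sum; have := sum_inblock_vertices (ltn_ord j); rewrite sumA => ->.
Qed.

Let sum_bb (j j' : 'I_s) : \sum_(k < r) b k j * b k j' = (j == j')%:R * a j.
Proof.
case: (eqVneq j j') => [<-|jj']; rewrite ?mul1r ?mul0r.
  by rewrite -sum_b_col; apply: eq_bigr => k _; rewrite -natrM mulnb andbb.
apply: big1 => k _; rewrite -natrM mulnb.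
case: (boolP (inblock A k j)) => //= kj; case: (boolP (inblock A k j')) => //= kj'.
by case/eqP: jj'; apply: val_inj; exact: inblock_uniq kj kj'.
Qed.

Let sum_a : \sum_(j < s) a j = r%:R.
Proof.
by rewrite -natr_sum -(big_mkord xpredT (nth 0 A)) -(big_nth 0 xpredT id) -sumnE sumA.
Qed.

Let P : 'M[R]_r := \matrix_(i, k) (c * (i == k)%:R + t / r%:R).
Let Q : 'M[R]_(r, s) := \matrix_(i, j) (t * b i j / r%:R).
Let S : 'M[R]_(s, r) := \matrix_(j, k) (t * b k j / a j).

Let charmx_block : x%:M - signed_lap G t = block_mx P Q S d%:M.
Proof.
rewrite -[LHS]submxK; congr block_mx; apply/matrixP => i k; rewrite !mxE.
- rewrite (inj_eq (@lshift_inj _ _)) Khat_adj_ll gdeg_Khat_l //.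
  by rewrite cE; case: (i == k) => /=; field.
- rewrite Khat_adj_lr gdeg_Khat_l // eq_lrshift /=; ring.
- rewrite Khat_adj_rl gdeg_Khat_r // eq_rlshift /=; ring.
- rewrite Khat_adj_rr (inj_eq (@rshift_inj _ _)).
  by case: (i == k) => /=; ring.
Qed.

Let E : 'M[R]_(r, s) := \matrix_(i, j) b i j.
Let K : 'M[R]_(s, r) := \matrix_(j, k) (t / r%:R - b k j / (d * r%:R * a j)).

Let schur_complement : P - d^-1 *: (Q *m S) = c%:M + E *m K.
Proof.
apply/matrixP => i k; rewrite !mxE.
under eq_bigr do rewrite !mxE.
under [X in _ = _ + X]eq_bigr do rewrite !mxE mulrBr.
rewrite sumrB -mulr_suml sum_b_row big_distrr /=.
have -> : \sum_(j < s) d^-1 * (t * b i j / r%:R * (t * b k j / a j))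
    = \sum_(j < s) b i j * (b k j / (d * r%:R * a j)).
  apply: eq_bigr => j _.
  transitivity (t ^+ 2 * (b i j * (b k j / (d * r%:R * a j)))).
    by field; rewrite a0 r0 d0.
  by rewrite t2 mul1r.
by rewrite mulr_natr; ring.
Qed.

Let v : 'M[R]_(1, s) := \matrix_(_, j) (t * a j / (r%:R * c)).

Let reduced_mx : 1%:M + c^-1 *: (K *m E) = e%:M + const_mx 1 *m v.
Proof.
apply/matrixP => j j'; rewrite !mxE big_ord1.
under eq_bigr do rewrite !mxE mulrBl mulrAC.
rewrite sumrB; under [X in _ * (_ - X)]eq_bigr do rewrite mulrAC.
rewrite -!mulr_suml -mulr_sumr sum_b_col sum_bb !mxE.
by case: (j == j'); rewrite /= ?mulr1n ?mulr0n; field; rewrite a0 c0 d0 r0.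
Qed.

Let det_charmx_factored :
  \det (x%:M - signed_lap G t) =
  d ^+ s * (c ^+ r * (e ^+ s * (1 + e^-1 * (t / c)))).
Proof.
rewrite charmx_block det_block_scalar // schur_complement det_scalarD_mulmx //.
rewrite reduced_mx det_scalarD_mulmx // det_mx11 !mxE.
under eq_bigr do rewrite !mxE mulr1.
rewrite -mulr_suml -mulr_sumr sum_a /=.
by congr (_ * (_ * (_ * (_ + _ * _)))); field; rewrite c0 r0.
Qed.

Lemma det_Khat_charmx :
  \det (x%:M - signed_lap G t) =
  ((c * d * r%:R - 1) / r%:R) ^+ (s - 1) * c ^+ (r - s + 1) * (d + t).
Proof.
rewrite det_charmx_factored.
have qE : e = (c * d * r%:R - 1) / (c * d * r%:R) by field; rewrite c0 d0 r0.
have q0 : c * d * r%:R - 1 != 0 by rewrite subr_eq0.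
have last_factor : 1 + e^-1 * (t / c) = r%:R * c * (d + t) / (c * d * r%:R - 1).
  transitivity ((c * d * r%:R - 1 + t * d * r%:R) / (c * d * r%:R - 1)).
    by rewrite qE; field; rewrite q0 c0 d0 r0.
  congr (_ / _); apply/eqP; rewrite -subr_eq0; apply/eqP.
  by transitivity (t ^+ 2 - 1); [rewrite cE; field | rewrite t2 subrr].
rewrite last_factor qE.
case: (size A) s_gt0 s_le_r => [//|k] _ kr.
rewrite subn1 /= (_ : (r - k.+1 + 1 = r - k)%N); last by lia.
rewrite -{1}(subnK (ltnW kr)) exprD !exprS !expr_div_n !exprMn.
set q := c * d * r%:R - 1.
have := expf_neq0 k c0; have := expf_neq0 k d0; have := expf_neq0 k r0.
move: (c ^+ k) (d ^+ k) ((r%:R : R) ^+ k) => ck dk rk rk0 dk0 ck0.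
by field; rewrite rk0 q0 dk0 ck0 r0 d0 c0.
Qed.

End KhatCharDet.

Lemma Khat_charmx_nonvanishing (R : realFieldType) (r : nat) (t x : R) :
  (0 < r)%N -> t ^+ 2 = 1 -> 3 <= x ->
  [/\ x - (1 + t / r%:R) != 0, x - 1 != 0
    & (x - (1 + t / r%:R)) * (x - 1) * r%:R != 1].
Proof.
move=> r_gt0 /eqP; rewrite sqrf_eq1 => t_pm1 x_ge3.
have r_ge1 : 1 <= r%:R :> R by rewrite ler1n.
have t_div_r : -1 <= t / r%:R <= 1.
  have : 0 < (r%:R : R)^-1 <= 1 by rewrite invr_gt0 invf_le1 ltr0n ?r_gt0 ?ltr0n.
  by case/orP: t_pm1 => /eqP-> /andP[? ?]; rewrite ?mul1r ?mulN1r; lra.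
have c_ge1 : 1 <= x - (1 + t / r%:R) by lra.
have cdr_ge2 : 2 <= (x - (1 + t / r%:R)) * (x - 1) * r%:R.
  by rewrite -[2]mulr1 ler_pM ?mulr_ge0 //; nra.
by split; apply/eqP; lra.
Qed.

Lemma Khat_quadratic_factor (R : rcfType) (r : nat) (t x : R) :
  (0 < r)%N -> t ^+ 2 = 1 ->
  (x - (2 * r%:R + t - Num.sqrt (4 * r%:R + 1)) / (2 * r%:R)) *
  (x - (2 * r%:R + t + Num.sqrt (4 * r%:R + 1)) / (2 * r%:R)) =
  ((x - (1 + t / r%:R)) * (x - 1) * r%:R - 1) / r%:R.
Proof.
move=> r_gt0 t2; have r0 : r%:R != 0 :> R by rewrite pnatr_eq0 -lt0n.
have sqrt_sqr : Num.sqrt (4 * r%:R + 1) ^+ 2 = 4 * r%:R + 1 :> R.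
  by rewrite sqr_sqrtr // addr_ge0 ?mulr_ge0 ?ler0n.
transitivity (((2 * r%:R * (x - 1) - t) ^+ 2 - (4 * r%:R + 1)) / (4 * r%:R ^+ 2)).
  by rewrite -[in RHS]sqrt_sqr; field; rewrite r0.
by move/eqP: t2; rewrite sqrf_eq1 => /orP[] /eqP->; field; rewrite r0.
Qed.

Lemma char_poly_signed_lap_Khat (R : rcfType) (r s : nat) (A : seq nat) (t : R) :
  is_partition r s A -> (0 < s)%N -> t ^+ 2 = 1 ->
  char_poly (signed_lap (@Khat_adj r A) t) =
    ('X - ((2 * r%:R + t - Num.sqrt (4 * r%:R + 1)) / (2 * r%:R))%:P) ^+ (s - 1)
    * ('X - ((2 * r%:R + t + Num.sqrt (4 * r%:R + 1)) / (2 * r%:R))%:P) ^+ (s - 1)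
    * ('X - (1 + t / r%:R)%:P) ^+ (r - s + 1)
    * ('X - (1 - t)%:P).
Proof.
move=> /and3P[/eqP <- partsA /eqP sumA] s_gt0 t2.
have r_gt0 : (0 < r)%N by rewrite (leq_trans s_gt0) // -sumA leq_size_sumn.
apply: (@poly_eq_on_ge _ 3) => x x_ge3; rewrite horner_char_poly.
have [c0 d0 cdr1] := Khat_charmx_nonvanishing r_gt0 t2 x_ge3.
rewrite (det_Khat_charmx sumA partsA s_gt0 t2 erefl c0 d0 cdr1).
rewrite -Khat_quadratic_factor // exprMn !hornerE.
by congr (_ * _); ring.
Qed.

Theorem mainTheorem6 (R : rcfType) (r s : nat) (A : seq nat) :
  (4 <= r)%N -> (2 <= s)%N -> (s <= r - 1)%N -> is_partition r s A ->
  char_poly (@std_lap R _ (@Khat_adj r A)) =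
    ('X - ((2 * r%:R + 1 - Num.sqrt (4 * r%:R + 1)) / (2 * r%:R))%:P) ^+ (s - 1)
    * ('X - ((2 * r%:R + 1 + Num.sqrt (4 * r%:R + 1)) / (2 * r%:R))%:P) ^+ (s - 1)
    * ('X - (1 + r%:R^-1)%:P) ^+ (r - s + 1)
    * 'X
  /\
  char_poly (@signless_lap R _ (@Khat_adj r A)) =
    ('X - ((2 * r%:R - 1 - Num.sqrt (4 * r%:R + 1)) / (2 * r%:R))%:P) ^+ (s - 1)
    * ('X - ((2 * r%:R - 1 + Num.sqrt (4 * r%:R + 1)) / (2 * r%:R))%:P) ^+ (s - 1)
    * ('X - (1 - r%:R^-1)%:P) ^+ (r - s + 1)
    * ('X - 2%:P).
Proof.
move=> _ s_ge2 _ partA; have s_gt0 : (0 < s)%N by rewrite ltnW.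
rewrite std_lap_signed signless_lap_signed.
rewrite !(char_poly_signed_lap_Khat partA) ?expr1n ?sqrrN ?expr1n //.
by rewrite mul1r mulN1r subrr subr0 opprK.
Qed.
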